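(* Let $k$ be a field of characteristic zero, $n\ge1$, $S=k[x_1,\ldots,x_n]$, and $(S,L)$ a triangularizable Lie–Rinehart algebra with basis $\alpha_1,\ldots,\alpha_n$ and enveloping algebra $U$. If $p>0$ and $u\in F_pU$ satisfy $d^0(u)\equiv0\pmod{F_{p-2}\mathcal{X}^1}$, then $u\in F_{p-1}U$.
   Context: Triangularizable: $L\subseteq\operatorname{Der}(S)$ is an $S$-submodule and Lie subalgebra which is a free $S$-module with basis of derivations $\alpha_1,\ldots,\alpha_n$ such that $\alpha_i(x_j)=0$ for $i>j$ and $\alpha_1(x_1)\cdots\alpha_n(x_n)\ne0$. $U$ is the universal enveloping algebra of the Lie–Rinehart algebra $(S,L)$, in which $[\alpha,s]=\alpha(s)$ for $\alpha\in L$, $s\in S$. For $I=(i_n,\ldots,i_1)\in\mathbb{N}^n$, $\alpha^I=\alpha_n^{i_n}\cdots\alpha_1^{i_1}$ and $|I|=\sum i_m$; these form a left $S$-basis of $U$, and $F_pU$ is the $S$-span of $\alpha^I$ with $|I|\le p$ ($F_pU=0$ for $p<0$). With $W=\operatorname{span}_k(x_1,\ldots,x_n)$ and dual basis $\hat x_1,\ldots,\hat x_n$, $\mathcal{X}^1=U\otimes_k W^*$, with elements $\sum_k u_k\hat x_k$; $d^0:U\to\mathcal{X}^1$ is $d^0(u)=\sum_{k=1}^n[u,x_k]\hat x_k$; and $F_p\mathcal{X}^1$ is the $k$-span of $f\alpha^I\hat x_k$ with $f\in S$, $|I|\le p$. *)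

From HB Require Import structures.
From mathcomp Require Import all_boot all_order all_algebra.
From mathcomp Require Import mpoly.
Set Implicit Arguments. Unset Strict Implicit. Unset Printing Implicit Defensive.
Import Order.TTheory GRing.Theory Num.Theory.
Local Open Scope ring_scope.

(* S = k[x_1,...,x_n] is {mpoly k[n]}; x_j is 'X_j (indices 0..n-1). *)

Definition isDer (k : fieldType) (n : nat) (D : {mpoly k[n]} -> {mpoly k[n]}) : Prop :=
  [/\ forall a b, D (a + b) = D a + D b,
      forall (c : k) a, D (c *: a) = c *: D a
    & forall a b, D (a * b) = a * D b + D a * b].

Definition bracket (k : fieldType) (n : nat) (D E : {mpoly k[n]} -> {mpoly k[n]}) :=
  fun s => D (E s) - E (D s).

Definition inL (k : fieldType) (n : nat) (alpha : 'I_n -> {mpoly k[n]} -> {mpoly k[n]})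
  (D : {mpoly k[n]} -> {mpoly k[n]}) : Prop :=
  exists c : 'I_n -> {mpoly k[n]}, forall s, D s = \sum_(i < n) c i * alpha i s.

Definition triangularizable (k : fieldType) (n : nat)
  (alpha : 'I_n -> {mpoly k[n]} -> {mpoly k[n]}) : Prop :=
  [/\ forall i, isDer (alpha i),
      (* alpha is S-linearly independent, i.e. a basis of the free S-module L *)
      forall c : 'I_n -> {mpoly k[n]},
        (forall s, \sum_(i < n) c i * alpha i s = 0) -> forall i, c i = 0,
      forall i j, inL alpha (bracket (alpha i) (alpha j)),
      forall i j : 'I_n, (j < i)%N -> alpha i 'X_j = 0
    & \prod_(i < n) alpha i 'X_i != 0].

Definition LR_relations (k : fieldType) (n : nat)
  (alpha : 'I_n -> {mpoly k[n]} -> {mpoly k[n]}) (A : pzRingType)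
  (fS : {mpoly k[n]} -> A) (fL : ({mpoly k[n]} -> {mpoly k[n]}) -> A) : Prop :=
  [/\ forall D E, inL alpha D -> inL alpha E ->
        fL (fun s => D s + E s) = fL D + fL E,
      forall (f : {mpoly k[n]}) D, inL alpha D ->
        fL (fun s => f * D s) = fS f * fL D,
      forall D E, inL alpha D -> inL alpha E ->
        fL (bracket D E) = fL D * fL E - fL E * fL D
    & forall D (s : {mpoly k[n]}), inL alpha D ->
        fL D * fS s - fS s * fL D = fS (D s)].

Definition is_LR_envelope (k : fieldType) (n : nat)
  (alpha : 'I_n -> {mpoly k[n]} -> {mpoly k[n]}) (U : pzRingType)
  (iS : {rmorphism {mpoly k[n]} -> U}) (iL : ({mpoly k[n]} -> {mpoly k[n]}) -> U) : Prop :=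
  LR_relations alpha iS iL /\
  forall (A : pzRingType) (fS : {rmorphism {mpoly k[n]} -> A})
         (fL : ({mpoly k[n]} -> {mpoly k[n]}) -> A),
    LR_relations alpha fS fL ->
    (exists Phi : {rmorphism U -> A},
        (forall s, Phi (iS s) = fS s) /\
        (forall D, inL alpha D -> Phi (iL D) = fL D)) /\
    (forall Phi1 Phi2 : {rmorphism U -> A},
        (forall s, Phi1 (iS s) = Phi2 (iS s)) ->
        (forall D, inL alpha D -> Phi1 (iL D) = Phi2 (iL D)) ->
        forall u, Phi1 u = Phi2 u).

(* alpha^I = alpha_n^{i_n} ... alpha_1^{i_1} in U, for a multi-index I. *)
Definition alpha_mon (k : fieldType) (n : nat)
  (alpha : 'I_n -> {mpoly k[n]} -> {mpoly k[n]}) (U : pzRingType)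
  (iL : ({mpoly k[n]} -> {mpoly k[n]}) -> U) (I : 'I_n -> nat) : U :=
  \prod_(i < n) iL (alpha (rev_ord i)) ^+ I (rev_ord i).

(* u in F_p U: u is a left S-combination of alpha^I with |I| <= p;
   F_p U = 0 for p < 0. (Multi-indices with |I| <= p have entries <= p.) *)
Definition inF (k : fieldType) (n : nat)
  (alpha : 'I_n -> {mpoly k[n]} -> {mpoly k[n]}) (U : pzRingType)
  (iS : {rmorphism {mpoly k[n]} -> U}) (iL : ({mpoly k[n]} -> {mpoly k[n]}) -> U)
  (p : int) (u : U) : Prop :=
  match p with
  | Posz m => exists f : {ffun 'I_n -> 'I_m.+1} -> {mpoly k[n]},
      u = \sum_(I : {ffun 'I_n -> 'I_m.+1} | (\sum_(i < n) (I i : nat) <= m)%N)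
            iS (f I) * alpha_mon alpha iL (fun i => (I i : nat))
  | Negz _ => u = 0
  end.

(* X^1 = U (x) W^*, an element sum_k u_k xhat_k is the family (u_k)_k. *)
Definition d0 (k : fieldType) (n : nat) (U : pzRingType)
  (iS : {rmorphism {mpoly k[n]} -> U}) (u : U) : 'I_n -> U :=
  fun j => u * iS 'X_j - iS 'X_j * u.

(* F_p X^1 = k-span of f alpha^I xhat_k, |I| <= p, i.e. sum_k F_pU xhat_k. *)
Definition inFX (k : fieldType) (n : nat)
  (alpha : 'I_n -> {mpoly k[n]} -> {mpoly k[n]}) (U : pzRingType)
  (iS : {rmorphism {mpoly k[n]} -> U}) (iL : ({mpoly k[n]} -> {mpoly k[n]}) -> U)
  (p : int) (w : 'I_n -> U) : Prop :=
  forall j, inF alpha iS iL p (w j).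

From HB Require Import structures.
From mathcomp Require Import all_boot all_order all_algebra.
From mathcomp Require Import mpoly.
From mathcomp Require Import boolp.
From mathcomp Require Import zify.
Import Order.TTheory GRing.Theory Num.Theory.
Set Implicit Arguments. Unset Strict Implicit. Unset Printing Implicit Defensive.
Local Open Scope ring_scope.

(** Write [ad_j T = T x_j - x_j T] in [U].  Since [ad_j] kills [S] and maps
  [alpha_i] to [alpha_i(x_j)] in [S], any [p + 1]-fold iterated commutator
  [ad_{j_1} ... ad_{j_{p+1}}] kills [F_p U]; so [d^0(u) in F_{p-2}] implies that
  every [p]-fold iterated commutator of [u] vanishes.  On a monomial [alpha^w]
  of degree [p] such a commutator lies in [S] and equals [ad_coef w js], a sum
  over the ways of pairing the letters of [w] with the [j]'s.  Triangularity
  forces [ad_coef w js = 0] unless [weight w <= weight js], and for equal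
  weights [ad_coef w js] is nonzero only if [w] is a permutation of [js], in
  which case it is a product of factorials times [prod_j alpha_j(x_j)], nonzero
  in characteristic zero.  Applying the commutators indexed by a top-degree
  monomial of minimal weight with a nonzero coefficient therefore isolates that
  coefficient, which must vanish.  Injectivity of [S -> U] comes from the
  action of [U] on [S] by additive endomorphisms. *)

Fixpoint picks (T : Type) (w : seq T) : seq (T * seq T) :=
  if w is i :: t then (i, t) :: [seq (y.1, i :: y.2) | y <- picks t] else [::].

Lemma picks_perm (T : eqType) (w : seq T) y :
  y \in picks w -> perm_eq w (y.1 :: y.2).
Proof.
elim: w y => [|i t IH] y //=; rewrite inE => /orP[/eqP -> //|].
case/mapP => z /IH /permP hz -> /=; apply/permP => P /=.
by rewrite hz /= addnCA.
Qed.

Lemma picks_size (T : eqType) (w : seq T) y :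
  y \in picks w -> size w = (size y.2).+1.
Proof. by move/picks_perm/perm_size. Qed.

Lemma map_fst_picks (T : Type) (w : seq T) : map fst (picks w) = w.
Proof. by elim: w => //= i t IH; rewrite -map_comp; congr (_ :: _). Qed.

Lemma sumr_neq0_seq (V : nmodType) (I : eqType) (r : seq I) (F : I -> V) :
  \sum_(i <- r) F i != 0 -> exists2 i, i \in r & F i != 0.
Proof.
move=> nz; apply/hasP; apply: contraNT nz => /hasPn F0.
by rewrite big1_seq // => i /F0 /negPn /eqP.
Qed.

Definition weight n (w : seq 'I_n) : nat := \sum_(i <- w) i.

Lemma weight_cons n (j : 'I_n) js : weight (j :: js) = (j + weight js)%N.
Proof. exact: big_cons. Qed.

Lemma picks_weight n (w : seq 'I_n) y :
  y \in picks w -> weight w = (y.1 + weight y.2)%N.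
Proof. by move/picks_perm => hp; rewrite /weight (perm_big _ hp) big_cons. Qed.

Definition mult_fact n (js : seq 'I_n) : nat := \prod_(i < n) (count_mem i js)`!.

Lemma mult_fact_cons n (j : 'I_n) js :
  mult_fact (j :: js) = ((count_mem j js).+1 * mult_fact js)%N.
Proof.
rewrite /mult_fact (bigD1 j) //= [in RHS](bigD1 j) //= eqxx add1n factS mulnA.
by congr (_ * _)%N; apply: eq_bigr => i; rewrite eq_sym => /negbTE ->.
Qed.

Lemma mult_fact_gt0 n (js : seq 'I_n) : (0 < mult_fact js)%N.
Proof. by rewrite /mult_fact prodn_gt0 // => i; rewrite fact_gt0. Qed.

Section Commutators.
Variables (R : comPzRingType) (A : pzRingType) (fS : {rmorphism R -> A}).
Variables (n : nat) (x : 'I_n -> R).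

Definition adx j (T : A) := T * fS (x j) - fS (x j) * T.

Lemma adx_is_zmod_morphism j : zmod_morphism (adx j).
Proof.
move=> T T'; rewrite /adx mulrBl mulrBr !opprB [LHS]addrACA [RHS]addrACA.
by rewrite [- (T' * _) + _]addrC.
Qed.
HB.instance Definition _ j :=
  GRing.isZmodMorphism.Build A A (adx j) (adx_is_zmod_morphism j).

Fixpoint adxs (js : seq 'I_n) (T : A) : A :=
  if js is j :: js' then adxs js' (adx j T) else T.

Lemma adxs_is_zmod_morphism js : zmod_morphism (adxs js).
Proof. by elim: js => // j js IH T T' /=; rewrite raddfB IH. Qed.
HB.instance Definition _ js :=
  GRing.isZmodMorphism.Build A A (adxs js) (adxs_is_zmod_morphism js).

Lemma adxM j T T' : adx j (T * T') = adx j T * T' + T * adx j T'.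
Proof. by rewrite /adx mulrBl mulrBr !mulrA [RHS]addrC [RHS]addrA subrK. Qed.

Lemma adx_fS j c : adx j (fS c) = 0.
Proof. by rewrite /adx -!rmorphM mulrC subrr. Qed.

Lemma adx_fSl j c T : adx j (fS c * T) = fS c * adx j T.
Proof. by rewrite adxM adx_fS mul0r add0r. Qed.

Lemma adxs_fSl js c T : adxs js (fS c * T) = fS c * adxs js T.
Proof. by elim: js T => //= j js IH T; rewrite adx_fSl IH. Qed.

Fixpoint order_lt m (T : A) : Prop :=
  if m is m'.+1 then forall j, order_lt m' (adx j T) else T = 0.

Lemma order_lt0 m : order_lt m 0.
Proof. by elim: m => //= m IH j; rewrite raddf0. Qed.

Lemma order_ltD m T T' : order_lt m T -> order_lt m T' -> order_lt m (T + T').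
Proof.
elim: m T T' => [|m IH] T T' /=; first by move=> -> ->; rewrite addr0.
by move=> hT hT' j; rewrite raddfD; apply: IH (hT j) (hT' j).
Qed.

Lemma order_lt_sum m (I : Type) (r : seq I) (P : pred I) (F : I -> A) :
  (forall i, P i -> order_lt m (F i)) -> order_lt m (\sum_(i <- r | P i) F i).
Proof.
by move=> hF; apply: big_ind => //; [exact: order_lt0 | exact: order_ltD].
Qed.

Lemma order_lt_fSl m c T : order_lt m T -> order_lt m (fS c * T).
Proof.
elim: m T => [|m IH] T /=; first by move->; rewrite mulr0.
by move=> hT j; rewrite adx_fSl; apply: IH.
Qed.

Lemma order_ltS m T : order_lt m T -> order_lt m.+1 T.
Proof.
by elim: m T => [|m IH] T /= hT j; [rewrite hT raddf0 | apply: IH].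
Qed.

Lemma order_lt_le m m' T : (m <= m')%N -> order_lt m T -> order_lt m' T.
Proof. by move/subnK <-; elim: (m' - m)%N => // d IH /IH; apply: order_ltS. Qed.

Lemma order_lt_adxs js T : order_lt (size js) T -> adxs js T = 0.
Proof. by elim: js T => //= j js IH T hT; apply: IH. Qed.

Lemma order_lt_fS c : order_lt 1 (fS c).
Proof. by move=> j; rewrite adx_fS. Qed.

Lemma order_ltM a b T T' :
  order_lt a T -> order_lt b T' -> order_lt (a + b).-1 (T * T').
Proof.
elim: a b T T' => [|a IHa] b T T' hT; first by rewrite hT mul0r => _; apply: order_lt0.
elim: b T' => [|b IHb] T' hT'; first by rewrite hT' mulr0; apply: order_lt0.
rewrite addSn addnS /= => j; rewrite adxM.
apply: order_ltD; first by have := IHa _ _ _ (hT j) hT'; rewrite addnS.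
by have := IHb _ (hT' j); rewrite addSn.
Qed.

Variables (alpha : 'I_n -> R -> R) (a : 'I_n -> A).
Hypothesis comm_a : forall i s, a i * fS s - fS s * a i = fS (alpha i s).

Lemma adx_a i j : adx j (a i) = fS (alpha i (x j)).
Proof. exact: comm_a. Qed.

Lemma order_lt_a i : order_lt 2 (a i).
Proof. by move=> j; rewrite adx_a; apply: order_lt_fS. Qed.

Lemma order_lt_word w : order_lt (size w).+1 (\prod_(i <- w) a i).
Proof.
elim: w => [|i w IH]; first by rewrite big_nil -(rmorph1 fS); apply: order_lt_fS.
by rewrite big_cons; exact: order_ltM (order_lt_a i) IH.
Qed.

Fixpoint ad_coef (w js : seq 'I_n) : R :=
  if js is j :: js' then \sum_(y <- picks w) alpha y.1 (x j) * ad_coef y.2 js'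
  else (w == [::])%:R.

Lemma ad_coef_size w js : ad_coef w js != 0 -> size w = size js.
Proof.
elim: js w => [|j js IH] w /=; first by case: w => //= ? ?; rewrite eqxx.
case/sumr_neq0_seq => y /picks_size -> nz; congr _.+1; apply: IH.
by apply: contraNneq nz => ->; rewrite mulr0.
Qed.

Lemma adx_word j w :
  order_lt (size w).-1 (adx j (\prod_(i <- w) a i) -
    \sum_(y <- picks w) fS (alpha y.1 (x j)) * \prod_(i <- y.2) a i).
Proof.
elim: w => [|i t IH] /=.
  by rewrite !big_nil subr0 -(rmorph1 fS) adx_fS.
set Rt := _ - _ in IH.
have -> : adx j (\prod_(k <- i :: t) a k) -
    \sum_(y <- (i, t) :: [seq (y.1, i :: y.2) | y <- picks t])
      fS (alpha y.1 (x j)) * \prod_(k <- y.2) a k =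
  a i * Rt + \sum_(y <- picks t) fS (alpha i (alpha y.1 (x j))) * \prod_(k <- y.2) a k.
  rewrite !big_cons big_map /= adxM adx_a /Rt opprD addrACA subrr add0r.
  under [X in _ - X = _]eq_bigr => y _ do rewrite big_cons.
  under [X in _ = _ + X]eq_bigr => y _ do rewrite -comm_a mulrBl -!mulrA.
  by rewrite sumrB [in RHS]mulrBr [in RHS]mulr_sumr [RHS]addrA subrK.
apply: order_ltD.
  case: (size t) IH => [|m] IH; first by rewrite IH mulr0.
  exact: order_ltM (order_lt_a i) IH.
rewrite big_seq; apply: order_lt_sum => y /picks_size ->.
exact/order_lt_fSl/order_lt_word.
Qed.

Lemma adxs_word js w : (size w <= size js)%N ->
  adxs js (\prod_(i <- w) a i) = fS (ad_coef w js).
Proof.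
rewrite leq_eqVlt => /orP[/eqP|] hs; last first.
  have /eqP -> : ad_coef w js == 0.
    by apply: contraLR hs => /ad_coef_size ->; rewrite ltnn.
  by rewrite rmorph0; apply/order_lt_adxs/(order_lt_le hs)/order_lt_word.
elim: js w hs => [|j js IH] w /=; first by move/size0nil ->; rewrite big_nil rmorph1.
move=> hs; have := adx_word j w; rewrite hs /= => /order_lt_adxs.
rewrite raddfB /= => /subr0_eq ->.
rewrite raddf_sum rmorph_sum /=; apply: eq_big_seq => y yin.
rewrite adxs_fSl IH ?rmorphM //.
by move: hs; rewrite (picks_size yin) => -[].
Qed.

Hypothesis alpha_x_triu : forall i j : 'I_n, (j < i)%N -> alpha i (x j) = 0.

Lemma ad_coef_weight js w : ad_coef w js != 0 -> (weight w <= weight js)%N.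
Proof.
elim: js w => [|j js IH] w /=; first by case: w => //= ? ?; rewrite eqxx.
case/sumr_neq0_seq => y yin nz.
have yj : (y.1 <= j)%N.
  by rewrite leqNgt; apply: contraNN nz => /alpha_x_triu ->; rewrite mul0r.
rewrite (picks_weight yin) weight_cons leq_add //; apply: IH.
by apply: contraNneq nz => ->; rewrite mulr0.
Qed.

Lemma ad_coef_weight_eq js w : weight w = weight js ->
  ad_coef w js = (perm_eq w js)%:R * (mult_fact js)%:R * \prod_(j <- js) alpha j (x j).
Proof.
elim: js w => [|j js IH] w /=.
  move=> _; rewrite big_nil /mult_fact big1 // !mulr1.
  by case: (boolP (perm_eq w [::])) => [/perm_nilP -> //|]; case: w.
move=> hw.
pose c := (perm_eq w (j :: js))%:R * (mult_fact js)%:R *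
  \prod_(k <- j :: js) alpha k (x k).
have term y : y \in picks w -> alpha y.1 (x j) * ad_coef y.2 js = (y.1 == j)%:R * c.
  move=> yin; have := picks_weight yin; rewrite hw weight_cons => hy.
  case: (ltngtP y.1 j) => yj.
  - have -> : ad_coef y.2 js = 0.
      by apply/eqP; apply: contraLR yj => /ad_coef_weight; rewrite -leqNgt; lia.
    by rewrite mulr0 (ltn_eqF yj : (y.1 == j) = false) mul0r.
  - by rewrite alpha_x_triu // mul0r (gtn_eqF yj : (y.1 == j) = false) mul0r.
  - have yjE : y.1 = j by apply: val_inj.
    rewrite yjE eqxx mul1r IH; last by move: hy; rewrite yjE => /addnI.
    have -> : perm_eq y.2 js = perm_eq w (j :: js).
      by rewrite (permPl (picks_perm yin)) yjE perm_cons.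
    by rewrite /c big_cons mulrCA mulrA.
rewrite (eq_big_seq _ term) -big_distrl /=.
rewrite -(big_map fst xpredT (fun i => (i == j)%:R)) map_fst_picks -natr_sum.
rewrite (_ : (\sum_(i <- w) (i == j))%N = count_mem j w); last first.
  by rewrite -sum1_count [RHS]big_mkcond; apply: eq_bigr => i _ /=; case: (i == j).
rewrite /c; case: (boolP (perm_eq w (j :: js))) => hp; last by rewrite !mul0r mulr0.
by rewrite (permP hp) /= eqxx mult_fact_cons natrM add1n !mul1r mulrA.
Qed.

End Commutators.

Section TopSymbol.
Variables (R : idomainType) (A : pzRingType) (fS : {rmorphism R -> A}).
Variables (n : nat) (x : 'I_n -> R) (alpha : 'I_n -> R -> R) (a : 'I_n -> A).
Hypothesis comm_a : forall i s, a i * fS s - fS s * a i = fS (alpha i s).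
Hypothesis alpha_x_triu : forall i j : 'I_n, (j < i)%N -> alpha i (x j) = 0.
Hypothesis alpha_x_diag : forall i, alpha i (x i) != 0.
Hypothesis fS_inj : injective fS.
Hypothesis charR0 : [pchar R] =i pred0.

Local Notation ad_coef := (ad_coef x alpha).

Lemma ad_coef_diag_neq0 w : ad_coef w w != 0.
Proof.
rewrite ad_coef_weight_eq // perm_refl mul1r mulf_neq0 //.
  by rewrite (pcharf0P _).1 // -lt0n mult_fact_gt0.
by rewrite prodf_seq_neq0; apply/allP => i _; apply: alpha_x_diag.
Qed.

Lemma top_coef_eq0 (T : finType) (P : pred T) (w : T -> seq 'I_n) (f : T -> R) m :
  (forall s t, perm_eq (w s) (w t) -> s = t) ->
  (forall t, P t -> size (w t) <= m)%N ->
  order_lt fS x m (\sum_(t | P t) fS (f t) * \prod_(i <- w t) a i) ->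
  forall t, P t -> size (w t) = m -> f t = 0.
Proof.
move=> w_inj w_le ord t0 Pt0 wt0; apply/eqP; apply: contraT => ft0.
pose Q t := [&& P t, size (w t) == m & f t != 0].
have Qt0 : Q t0 by rewrite /Q Pt0 wt0 eqxx.
have [t /and3P[Pt /eqP wt ft] t_min] := arg_minnP (fun t => weight (w t)) Qt0.
have sum_eq0 : \sum_(s | P s) f s * ad_coef (w s) (w t) = 0.
  apply: fS_inj; move: ord; rewrite -wt rmorph0 => /order_lt_adxs <-.
  rewrite !raddf_sum /=; apply: eq_bigr => s Ps.
  by rewrite adxs_fSl (adxs_word x comm_a) ?rmorphM // wt w_le.
have others s : P s -> s != t -> f s * ad_coef (w s) (w t) = 0.
  move=> Ps st; have [-> | fs] := eqVneq (f s) 0; first by rewrite mul0r.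
  have [-> | cs] := eqVneq (ad_coef (w s) (w t)) 0; first by rewrite mulr0.
  have Qs : Q s by rewrite /Q Ps (ad_coef_size cs) wt eqxx fs.
  have ws : weight (w s) = weight (w t).
    by apply/eqP; rewrite eqn_leq (ad_coef_weight alpha_x_triu cs) t_min.
  move: cs; rewrite ad_coef_weight_eq //.
  have [/w_inj/eqP | _] := boolP (perm_eq _ _); first by rewrite (negbTE st).
  by rewrite !mul0r eqxx.
move: sum_eq0; rewrite (bigD1 t) //= big1 ?addr0 => [/eqP|s /andP[]]; last exact: others.
by rewrite mulf_eq0 (negbTE ft) (negbTE (ad_coef_diag_neq0 _)).
Qed.

End TopSymbol.

Section AdditiveEndomorphisms.
Variable V : zmodType.

Record addEnd := AddEnd {
  addEnd_fun :> V -> V;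
  _ : forall u v, addEnd_fun (u + v) = addEnd_fun u + addEnd_fun v }.

HB.instance Definition _ := gen_eqMixin addEnd.
HB.instance Definition _ := gen_choiceMixin addEnd.

Lemma addEnd_ext (f g : addEnd) : f =1 g -> f = g.
Proof.
case: f g => f hf [g hg] /= /funext fg; subst g.
by congr AddEnd; apply: Prop_irrelevance.
Qed.

Lemma addEndD (f : addEnd) u v : f (u + v) = f u + f v.
Proof. by case: f. Qed.

Definition addEnd0 := @AddEnd (fun=> 0) (fun _ _ => esym (addr0 0)).
Definition addEnd1 := @AddEnd id (fun _ _ => erefl).

Lemma addEnd_add_subproof (f g : addEnd) u v :
  f (u + v) + g (u + v) = (f u + g u) + (f v + g v).
Proof. by rewrite !addEndD addrACA. Qed.
Definition addEnd_add f g := AddEnd (addEnd_add_subproof f g).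

Lemma addEnd_opp_subproof (f : addEnd) u v : - f (u + v) = - f u + - f v.
Proof. by rewrite addEndD opprD. Qed.
Definition addEnd_opp f := AddEnd (addEnd_opp_subproof f).

Lemma addEnd_comp_subproof (f g : addEnd) u v : f (g (u + v)) = f (g u) + f (g v).
Proof. by rewrite !addEndD. Qed.
Definition addEnd_comp f g := AddEnd (addEnd_comp_subproof f g).

Lemma addEnd_addA : associative addEnd_add.
Proof. by move=> f g h; apply: addEnd_ext => v /=; rewrite addrA. Qed.
Lemma addEnd_addC : commutative addEnd_add.
Proof. by move=> f g; apply: addEnd_ext => v /=; rewrite addrC. Qed.
Lemma addEnd_add0 : left_id addEnd0 addEnd_add.
Proof. by move=> f; apply: addEnd_ext => v /=; rewrite add0r. Qed.
Lemma addEnd_addN : left_inverse addEnd0 addEnd_opp addEnd_add.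
Proof. by move=> f; apply: addEnd_ext => v /=; rewrite addNr. Qed.
Lemma addEnd_compA : associative addEnd_comp.
Proof. by move=> f g h; apply: addEnd_ext. Qed.
Lemma addEnd_comp1 : left_id addEnd1 addEnd_comp.
Proof. by move=> f; apply: addEnd_ext. Qed.
Lemma addEnd_compr1 : right_id addEnd1 addEnd_comp.
Proof. by move=> f; apply: addEnd_ext. Qed.
Lemma addEnd_compDl : left_distributive addEnd_comp addEnd_add.
Proof. by move=> f g h; apply: addEnd_ext. Qed.
Lemma addEnd_compDr : right_distributive addEnd_comp addEnd_add.
Proof. by move=> f g h; apply: addEnd_ext => v /=; rewrite addEndD. Qed.

HB.instance Definition _ :=
  GRing.isZmodule.Build addEnd addEnd_addA addEnd_addC addEnd_add0 addEnd_addN.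
HB.instance Definition _ := GRing.Zmodule_isPzRing.Build addEnd
  addEnd_compA addEnd_comp1 addEnd_compr1 addEnd_compDl addEnd_compDr.

Lemma addEnd_addE (f g : addEnd) v : (f + g) v = f v + g v. Proof. by []. Qed.
Lemma addEnd_oppE (f : addEnd) v : (- f) v = - f v. Proof. by []. Qed.
Lemma addEnd_mulE (f g : addEnd) v : (f * g) v = f (g v). Proof. by []. Qed.

End AdditiveEndomorphisms.

Section RegularRepresentation.
Variable S : pzRingType.

Definition mulEnd (s : S) := AddEnd (mulrDr s).

Lemma mulEnd_is_zmod_morphism : zmod_morphism mulEnd.
Proof. by move=> s t; apply: addEnd_ext => v /=; rewrite mulrBl. Qed.
HB.instance Definition _ :=
  GRing.isZmodMorphism.Build S (addEnd S) mulEnd mulEnd_is_zmod_morphism.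

Lemma mulEnd_is_monoid_morphism : monoid_morphism mulEnd.
Proof.
split; first by apply: addEnd_ext => v /=; rewrite mul1r.
by move=> s t; apply: addEnd_ext => v /=; rewrite mulrA.
Qed.
HB.instance Definition _ :=
  GRing.isMonoidMorphism.Build S (addEnd S) mulEnd mulEnd_is_monoid_morphism.

(* Only the values on additive maps (such as the elements of [L]) matter. *)
Definition addEnd_of (D : S -> S) : addEnd S :=
  if pselect (forall u v, D (u + v) = D u + D v) is left D_add then AddEnd D_add
  else 0.

Lemma addEnd_ofE D : (forall u v, D (u + v) = D u + D v) -> addEnd_of D =1 D.
Proof. by rewrite /addEnd_of; case: pselect. Qed.

End RegularRepresentation.

Lemma pchar_mpoly (R : nzRingType) n : [pchar {mpoly R[n]}] =i [pchar R].
Proof. by move=> p; rewrite !inE -mpolyC_nat mpolyC_eq0. Qed.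

Definition mword n (I : 'I_n -> nat) : seq 'I_n :=
  flatten [seq nseq (I (rev_ord i)) (rev_ord i) | i <- index_enum 'I_n].

Lemma size_mword n (I : 'I_n -> nat) : size (mword I) = (\sum_(i < n) I i)%N.
Proof.
rewrite size_flatten sumnE !big_map (reindex_inj rev_ord_inj) /=.
by apply: eq_bigr => i _; rewrite size_nseq rev_ordK.
Qed.

Lemma count_mword n (I : 'I_n -> nat) j : count_mem j (mword I) = I j.
Proof.
rewrite count_flatten sumnE !big_map (reindex_inj rev_ord_inj) /=.
rewrite (bigD1 j) //= count_nseq /= rev_ordK eqxx mul1n big1 ?addn0 // => i.
by rewrite count_nseq /= rev_ordK eq_sym => /negbTE ->.
Qed.

Lemma perm_mword_inj n m (I J : {ffun 'I_n -> 'I_m}) :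
  perm_eq (mword (fun i => I i : nat)) (mword (fun i => J i : nat)) -> I = J.
Proof.
move=> /permP IJ; apply/ffunP => i; apply: val_inj.
by have := IJ (pred1 i); rewrite !count_mword.
Qed.

Section LieRinehart.
Variables (k : fieldType) (n : nat) (alpha : 'I_n -> {mpoly k[n]} -> {mpoly k[n]}).
Local Notation S := {mpoly k[n]}.

Lemma inL_basis i : inL alpha (alpha i).
Proof.
exists (fun j => (j == i)%:R) => s.
by rewrite (bigD1 i) //= eqxx mul1r big1 ?addr0 // => j /negbTE ->; rewrite mul0r.
Qed.

Lemma alpha_monE (U : pzRingType) (iL : (S -> S) -> U) I :
  alpha_mon alpha iL I = \prod_(i <- mword I) iL (alpha i).
Proof.
rewrite /alpha_mon /mword big_flatten big_map.
by apply: eq_bigr => i _; rewrite big_nseq iter_mulr_1.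
Qed.

Lemma LR_envelope_comm (U : pzRingType) iS iL : is_LR_envelope alpha iS iL ->
  forall i s, iL (alpha i) * iS s - iS s * iL (alpha i) = iS (alpha i s) :> U.
Proof. by case=> -[_ _ _ comm] _ i s; apply/comm/inL_basis. Qed.

Hypothesis alpha_der : forall i, isDer (alpha i).

Lemma inL_additive D : inL alpha D -> forall u v, D (u + v) = D u + D v.
Proof.
case=> c Dc u v; rewrite !Dc -big_split; apply: eq_bigr => i _.
by case: (alpha_der i) => -> _ _; rewrite mulrDr.
Qed.

Lemma inL_Leibniz D : inL alpha D -> forall u v, D (u * v) = u * D v + D u * v.
Proof.
case=> c Dc u v; rewrite !Dc mulr_sumr mulr_suml -big_split; apply: eq_bigr => i _.
case: (alpha_der i) => _ _ ->.
by rewrite mulrDr [c i * (u * _)]mulrCA [c i * (_ * v)]mulrA.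
Qed.

Lemma LR_relations_addEnd : LR_relations alpha (@mulEnd S) (@addEnd_of S).
Proof.
have DE D : inL alpha D -> addEnd_of D =1 D.
  by move=> hD; apply/addEnd_ofE/inL_additive.
split=> [D E hD hE | f D hD | D E hD hE | D s hD]; apply: addEnd_ext => v;
  have D_add := inL_additive hD.
- rewrite addEnd_ofE; last by move=> u w; rewrite D_add (inL_additive hE) addrACA.
  by rewrite addEnd_addE !DE.
- rewrite addEnd_ofE; last by move=> u w; rewrite D_add mulrDr.
  by rewrite addEnd_mulE DE.
- have E_add := inL_additive hE.
  rewrite addEnd_ofE; last by move=> u w; rewrite /bracket !(D_add, E_add) opprD addrACA.
  by rewrite addEnd_addE addEnd_oppE !addEnd_mulE !DE.
- rewrite addEnd_addE addEnd_oppE !addEnd_mulE /= !DE //.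
  by rewrite (inL_Leibniz hD) addrAC subrr add0r.
Qed.

Lemma LR_envelope_inj (U : pzRingType) iS iL :
  is_LR_envelope alpha iS iL -> injective (iS : S -> U).
Proof.
case=> _ /(_ _ (@mulEnd S) (@addEnd_of S) LR_relations_addEnd) [[Phi [PhiS _]] _].
move=> s t /(congr1 Phi); rewrite !PhiS => /(congr1 (fun f : addEnd S => f 1)) /=.
by rewrite !mulr1.
Qed.

End LieRinehart.

Section Filtration.
Variables (k : fieldType) (n : nat) (alpha : 'I_n -> {mpoly k[n]} -> {mpoly k[n]}).
Variables (U : pzRingType) (iS : {rmorphism {mpoly k[n]} -> U}).
Variable iL : ({mpoly k[n]} -> {mpoly k[n]}) -> U.
Hypothesis comm : forall i s, iL (alpha i) * iS s - iS s * iL (alpha i) = iS (alpha i s).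

Local Notation X := (fun j : 'I_n => 'X_j : {mpoly k[n]}).
Local Notation order_lt := (order_lt iS X).
Local Notation mon I := (alpha_mon alpha iL (fun i => I i : nat)).

Lemma order_lt_inF m v : inF alpha iS iL m%:Z v -> order_lt m.+1 v.
Proof.
case=> f ->; apply: order_lt_sum => I le_m; apply: order_lt_fSl.
rewrite alpha_monE; apply: order_lt_le (order_lt_word X comm _).
by rewrite ltnS size_mword.
Qed.

Lemma order_lt_d0 p u : (0 < p)%N ->
  inFX alpha iS iL (p%:Z - 2) (d0 iS u) -> order_lt p u.
Proof.
(* For [p = 1] both [hd] and the goal unfold to [forall j, d0 iS u j = 0]. *)
case: p => [|[|p]] // _ hd j; have := hd j.
by rewrite (_ : p.+2%:Z - 2 = p%:Z); [exact: order_lt_inF | lia].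
Qed.

Lemma inF_drop_top m (f : {ffun 'I_n -> 'I_m.+2} -> {mpoly k[n]}) :
  (forall I : {ffun 'I_n -> 'I_m.+2},
    (\sum_(i < n) (I i : nat))%N = m.+1 -> f I = 0) ->
  inF alpha iS iL m%:Z
    (\sum_(I : {ffun 'I_n -> 'I_m.+2} | (\sum_(i < n) (I i : nat) <= m.+1)%N)
      iS (f I) * mon I).
Proof.
move=> f_top.
pose wid (J : {ffun 'I_n -> 'I_m.+1}) := [ffun i => widen_ord (leqnSn m.+1) (J i)].
pose nar (I : {ffun 'I_n -> 'I_m.+2}) := [ffun i => inord (I i) : 'I_m.+1].
exists (fun J => f (wid J)).
transitivity (\sum_(I : {ffun 'I_n -> 'I_m.+2} | (\sum_(i < n) (I i : nat) <= m)%N)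
  iS (f I) * mon I).
  rewrite [LHS]big_mkcond [RHS]big_mkcond; apply: eq_bigr => I _.
  have [le_m | gt_m] := leqP (\sum_(i < n) (I i : nat)) m; first by rewrite (leqW le_m).
  have [eq_m1 | ne_m1] := eqVneq (\sum_(i < n) (I i : nat)) m.+1.
    by rewrite eq_m1 leqnn f_top // rmorph0 mul0r.
  by rewrite leqNgt ltn_neqAle eq_sym ne_m1 gt_m.
rewrite (reindex_onto wid nar) /=; last first.
  move=> I le_m; apply/ffunP => i; apply: val_inj; rewrite !ffunE /= inordK //.
  by rewrite ltnS; apply: leq_trans le_m; rewrite (bigD1 i) //= leq_addr.
apply: eq_big => J.
  have -> : nar (wid J) = J by apply/ffunP => i; apply: val_inj; rewrite !ffunE /= inordK.
  by rewrite eqxx andbT; under eq_bigr do rewrite ffunE.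
by move=> _; congr (_ * _); apply: eq_bigr => i _; rewrite ffunE.
Qed.

Hypothesis char_k0 : [pchar k] =i pred0.
Hypothesis alpha_X_triu : forall i j : 'I_n, (j < i)%N -> alpha i 'X_j = 0.
Hypothesis alpha_X_diag : forall i, alpha i 'X_i != 0.
Hypothesis iS_inj : injective iS.

Lemma inF_top_coef_eq0 m (f : {ffun 'I_n -> 'I_m.+2} -> {mpoly k[n]}) :
  order_lt m.+1
    (\sum_(I : {ffun 'I_n -> 'I_m.+2} | (\sum_(i < n) (I i : nat) <= m.+1)%N)
      iS (f I) * mon I) ->
  forall I : {ffun 'I_n -> 'I_m.+2}, (\sum_(i < n) (I i : nat))%N = m.+1 -> f I = 0.
Proof.
have char_S0 : [pchar {mpoly k[n]}] =i pred0 by move=> p; rewrite pchar_mpoly.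
under eq_bigr do rewrite alpha_monE.
move/(top_coef_eq0 comm alpha_X_triu alpha_X_diag iS_inj char_S0) => top I top_I.
apply: top; first exact: perm_mword_inj.
- by move=> J; rewrite size_mword.
- by rewrite top_I.
- by rewrite size_mword.
Qed.

End Filtration.

Unset Implicit Arguments.

Theorem proposition3p2 (k : fieldType) (n : nat)
  (alpha : 'I_n -> {mpoly k[n]} -> {mpoly k[n]})
  (U : pzRingType) (iS : {rmorphism {mpoly k[n]} -> U})
  (iL : ({mpoly k[n]} -> {mpoly k[n]}) -> U) (p : nat) (u : U) :
  [pchar k] =i pred0 ->
  (1 <= n)%N ->
  triangularizable alpha ->
  is_LR_envelope alpha iS iL ->
  (0 < p)%N ->
  inF alpha iS iL p%:Z u ->
  inFX alpha iS iL (p%:Z - 2) (d0 iS u) ->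
  inF alpha iS iL (p%:Z - 1) u.
Proof.
move=> char_k0 _ [alpha_der _ _ alpha_X_triu prod_neq0] env p_gt0 u_Fp d0u.
have comm := LR_envelope_comm env.
have alpha_X_diag i : alpha i 'X_i != 0 by move/prodf_neq0: prod_neq0; apply.
have u_ord := order_lt_d0 comm p_gt0 d0u.
case: p {p_gt0 d0u} u_Fp u_ord => // q [f ->] u_ord.
rewrite (_ : q.+1%:Z - 1 = q%:Z); last by lia.
apply: inF_drop_top.
move: u_ord; exact: (inF_top_coef_eq0 comm char_k0 alpha_X_triu alpha_X_diag
  (LR_envelope_inj alpha_der env) (f := f)).
Qed.
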